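(* Let $G$ be a connected simple graph with maximum degree at most $3$ and minimum degree at least $2$, in which no two adjacent vertices both have degree $3$. Let $M_1,M_2$ be disjoint matchings of $G$ such that $|M_1\cup M_2|$ is maximum over all pairs of disjoint matchings, and, subject to this, such that $G_{M_1,M_2}$ has the minimum number of connected components. Let $H$ be the graph with vertex set $E(G)\setminus(M_1\cup M_2)$ in which two distinct edges $e_1,e_2$ are adjacent if and only if their distance in $G$ is at most $2$. If $u_1u_2u_3$ and $v_1v_2v_3$ are two distinct components of $G_{M_1,M_2}$ that are paths $P_3$, then $u_1u_2,u_2u_3$ and $v_1v_2,v_2v_3$ do not lie in the same connected component of $H$.
   Context: $G_{M_1,M_2}$ denotes the subgraph of $G$ induced by the edge set $E(G)\setminus(M_1\cup M_2)$. $P_k$ denotes a path on $k$ vertices. The distance between two edges of $G$ is the distance between the corresponding vertices in the line graph of $G$. *)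

From mathcomp Require Import all_boot.
Set Implicit Arguments. Unset Strict Implicit. Unset Printing Implicit Defensive.

(* A simple graph: vertex finType T, symmetric irreflexive adjacency e.
   Edges are represented as 2-element vertex sets {x,y}. *)
Section Graph.
Variables (T : finType) (e : rel T).

Definition edges : {set {set T}} :=
  [set [set x; y] | x in T, y in T & e x y].

Definition deg (x : T) : nat := #|[set y | e x y]|.

Definition connected_graph : Prop := forall x y : T, connect e x y.

Definition matching (M : {set {set T}}) : Prop :=
  M \subset edges /\
  (forall f g, f \in M -> g \in M -> f != g -> [disjoint f & g]).

Definition rest_edges (M1 M2 : {set {set T}}) : {set {set T}} :=
  edges :\: (M1 :|: M2).

Definition rest_verts (M1 M2 : {set {set T}}) : {set T} :=
  \bigcup_(f in rest_edges M1 M2) f.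

Definition rest_rel (M1 M2 : {set {set T}}) : rel T :=
  fun x y => [set x; y] \in rest_edges M1 M2.

Definition ncomp (M1 M2 : {set {set T}}) : nat :=
  n_comp (connect (rest_rel M1 M2)) (mem (rest_verts M1 M2)).

(* distance in the line graph: adjacent edges share a vertex *)
Definition ledge_adj (f g : {set T}) : bool :=
  [&& f \in edges, g \in edges, f != g & f :&: g != set0].

Definition ldist_le2 (f g : {set T}) : bool :=
  [|| f == g, ledge_adj f g | [exists h, ledge_adj f h && ledge_adj h g]].

Definition Hadj (M1 M2 : {set {set T}}) : rel {set T} :=
  fun f g => [&& f \in rest_edges M1 M2, g \in rest_edges M1 M2,
                 f != g & ldist_le2 f g].

Definition P3_component (M1 M2 : {set {set T}}) (u1 u2 u3 : T) : Prop :=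
  [/\ [&& u1 != u2, u2 != u3 & u1 != u3],
      rest_rel M1 M2 u1 u2, rest_rel M1 M2 u2 u3, ~~ rest_rel M1 M2 u1 u3
    & [set x | connect (rest_rel M1 M2) u1 x] = [set u1; u2; u3]].

End Graph.

From mathcomp Require Import all_boot all_fingroup zify.
Set Implicit Arguments. Unset Strict Implicit. Unset Printing Implicit Defensive.

(* Only the maximality of |M1 :|: M2| is used.
   In a maximum pair every P3 component x1 x2 x3 of G_{M1,M2} is saturated:
   deg x2 = 2 and both ends are covered by M1 and by M2. Otherwise some edge
   could be added to M1 or M2, directly or after swapping M1 and M2 along the
   alternating chain through x2 (a Kempe chain). Consequently a free edge at
   distance at most 2 from the component, but not on it, is reached through a
   matching edge w a at an end w, and is an edge a b. Trading w a for w x2 in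
   its matching gives another maximum pair in which b a w is a saturated P3 and
   the other component is untouched, so a walk in H between the two components
   becomes one step shorter; induction on its length concludes, since the
   components are disjoint. *)

Lemma modn_double_uniq n i j :
  i + i = 1 %[mod n] -> j + j = 1 %[mod n] -> i = j %[mod n].
Proof.
move=> hi hj.
have := modnMmr i (j + j) n; rewrite hj modnMmr muln1 => ->.
have := modnMmr j (i + i) n; rewrite hi modnMmr muln1 => ->.
by rewrite !mulnDr mulnC.
Qed.

Lemma disjointP (T : finType) (A B : {set T}) :
  reflect (forall x, x \in A -> x \in B -> False) [disjoint A & B].
Proof.
apply: (iffP pred0P) => [AB x xA xB | AB x] /=; first by have := AB x; rewrite /= xA xB.
by apply/negbTE/negP => /andP[/AB].
Qed.

Lemma set2_eq_cases (T : finType) (x y a b : T) : [set x; y] = [set a; b] ->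
  (x = a /\ y = b) \/ (x = b /\ y = a).
Proof.
move=> xy_ab.
have ha : a \in [set x; y] by rewrite xy_ab set21.
have hb : b \in [set x; y] by rewrite xy_ab set22.
have hx : x \in [set a; b] by rewrite -xy_ab set21.
have hy : y \in [set a; b] by rewrite -xy_ab set22.
by move: ha hb hx hy => /set2P[] ? /set2P[] ? /set2P[] ? /set2P[] ?; subst; auto.
Qed.

Section PermOrbit.
Variables (T : finType) (s : {perm T}) (x : T).
Local Notation n := #|porbit s x|.

Lemma iter_porbit_mod i : iter i s x = iter (i %% n) s x.
Proof.
have iter_mul k : iter (k * n) s x = x.
  by elim: k => // k IH; rewrite mulSn iterD IH iter_porbit.
by rewrite {1}(divn_eq i n) addnC iterD iter_mul.
Qed.

Lemma eq_iter_porbit i j : iter i s x = iter j s x -> i = j %[mod n].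
Proof.
rewrite (iter_porbit_mod i) (iter_porbit_mod j) => eq_ij.
have n_gt0 : 0 < n by rewrite lt0n card_porbit_neq0.
have lt_mod k : k %% n < size (traject s x n) by rewrite size_traject ltn_pmod.
apply/eqP; rewrite -(nth_uniq x (lt_mod i) (lt_mod j) (uniq_traject_porbit s x)).
by rewrite !nth_traject ?ltn_pmod // eq_ij.
Qed.

End PermOrbit.

Section InvolutionChain.
Variables (T : finType) (s1 s2 : T -> T).
Hypotheses (s1K : involutive s1) (s2K : involutive s2).

Let rho : {perm T} := perm (inj_comp (inv_inj s1K) (inv_inj s2K)).

Let rhoE t : rho t = s1 (s2 t). Proof. by rewrite permE. Qed.

Let rhoVE t : rho^-1%g t = s2 (s1 t).
Proof. by apply: (@perm_inj _ rho); rewrite permKV rhoE s2K s1K. Qed.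

Let s2_iter i t : s2 (iter i rho t) = iter i rho^-1%g (s2 t).
Proof. by elim: i => //= i <-; rewrite rhoE rhoVE. Qed.

Let iterK i t : iter i rho (iter i rho^-1%g t) = t.
Proof. by elim: i t => // i IH t; rewrite iterSr iterS permKV IH. Qed.

(* C is the orbit of y under rho = s1 \o s2. As s2 y = y, s1 maps rho^i y to
   rho^(1-i) y, so its fixed points in C satisfy 2 i = 1 modulo #|C|, an
   equation with at most one solution. *)
Lemma involution_chain y : s2 y = y ->
  exists C : {set T}, [/\ y \in C, {in C, forall t, s1 t \in C},
    {in C, forall t, s2 t \in C} & {in C &, forall t u, s1 t = t -> s1 u = u -> t = u}].
Proof.
move=> s2y; pose C := porbit rho y.
have CE t : t \in C -> porbit rho t = C by move=> tC; apply/eqP; rewrite eq_porbit_mem.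
have memC t : reflect (exists i, t = iter i rho y) (t \in C).
  by apply: (iffP (porbitP _ _ _)) => -[i ->]; exists i; rewrite permX.
have rhoC t : t \in C -> rho t \in C.
  by move=> tC; have := mem_porbit rho 1 t; rewrite expg1 CE.
have rhoVC t : t \in C -> rho^-1%g t \in C.
  by move=> tC; have := mem_porbit rho^-1%g 1 t; rewrite expg1 porbitV CE.
have s2C t : t \in C -> s2 t \in C.
  case/memC => i ->; rewrite s2_iter s2y.
  by elim: i => [|i IH]; [apply: porbit_id | apply: rhoVC].
have s1E t : s1 t = rho (s2 t) by rewrite rhoE s2K.
have fixed t : t \in C -> s1 t = t -> exists2 i, t = iter i rho y & i + i = 1 %[mod #|C|].
  case/memC => i -> fix_t; exists i => //; apply: (@eq_iter_porbit _ rho y).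
  by rewrite iterD -fix_t s1E s2_iter s2y -iterSr iterS iterK.
exists C; split=> [|t tC|//|t u tC uC fix_t fix_u]; first exact: porbit_id.
  by rewrite s1E (rhoC _ (s2C _ tC)).
have [i -> hi] := fixed t tC fix_t; have [j -> hj] := fixed u uC fix_u.
by rewrite iter_porbit_mod (iter_porbit_mod _ _ j) (modn_double_uniq hi hj).
Qed.

End InvolutionChain.

Section Graph.
Variables (T : finType) (e : rel T).
Hypotheses (esym : symmetric e) (eirr : irreflexive e).
Implicit Types (M N : {set {set T}}) (C : {set T}) (f g h : {set T}).
Local Notation E := (edges e).
Local Notation rest M1 M2 := (rest_edges e M1 M2).

Lemma edgesP x y : ([set x; y] \in E) = e x y.
Proof.
apply/imset2P/idP => [[a b _] | xy]; last by exists x y; rewrite ?inE.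
by rewrite inE => ab /set2_eq_cases[[-> ->] | [-> ->]]; rewrite // esym.
Qed.

Lemma edge_through f x : f \in E -> x \in f -> exists2 y, e x y & f = [set x; y].
Proof.
case/imset2P=> a b _; rewrite inE => ab -> /set2P[] ->; first by exists b.
by exists a; rewrite 1?esym // setUC.
Qed.

Lemma deg_ge_uniq x s : uniq s -> all (e x) s -> size s <= deg e x.
Proof.
move=> /card_uniqP <- /allP s_nbr; apply/subset_leq_card/subsetP => y ys.
by rewrite inE s_nbr.
Qed.

Lemma deg_le_size x s : (forall y, e x y -> y \in s) -> deg e x <= size s.
Proof.
move=> s_nbr; apply: leq_trans (card_size s); apply/subset_leq_card/subsetP => y.
by rewrite inE => /s_nbr.
Qed.

Lemma deg_nbr_mem x s y : uniq s -> all (e x) s -> deg e x <= size s -> e x y -> y \in s.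
Proof.
move=> us s_nbr dx xy; apply: contraTT dx => ys; rewrite -ltnNge.
by apply: (@deg_ge_uniq x (y :: s)); rewrite /= ?ys ?us ?xy.
Qed.

Definition covered M x := [exists y, [set x; y] \in M].

Definition mate M x := odflt x [pick y | [set x; y] \in M].

Lemma coveredP M x : reflect (exists y, [set x; y] \in M) (covered M x).
Proof. exact: existsP. Qed.

Lemma matching_edge M f : matching e M -> f \in M -> f \in E.
Proof. by case=> /subsetP M_E _ /M_E. Qed.

Lemma matching_rel M x y : matching e M -> [set x; y] \in M -> e x y.
Proof. by move=> mM /(matching_edge mM); rewrite edgesP. Qed.

Lemma matching_uniq M x y z :
  matching e M -> [set x; y] \in M -> [set x; z] \in M -> y = z.
Proof.
case=> _ dis xy xz; case: (eqVneq [set x; y] [set x; z]) => [/set2_eq_cases|neq].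
  by case=> [[_ ->] | [<- ->]].
by have := disjointFr (dis _ _ xy xz neq) (set21 x y); rewrite set21.
Qed.

Lemma covered_mem M f x : matching e M -> f \in M -> x \in f -> covered M x.
Proof.
move=> mM fM xf; have [y _ fE] := edge_through (matching_edge mM fM) xf.
by apply/coveredP; exists y; rewrite -fE.
Qed.

Lemma mate_mem M x : covered M x -> [set x; mate M x] \in M.
Proof. by case/coveredP=> y xy; rewrite /mate; case: pickP => [//|/(_ y)]; rewrite xy. Qed.

Lemma mateE M x y : matching e M -> [set x; y] \in M -> mate M x = y.
Proof.
move=> mM xy; rewrite /mate; case: pickP => [z xz /= | /(_ y)]; last by rewrite xy.
exact: matching_uniq mM xz xy.
Qed.

Lemma mate_id M x : ~~ covered M x -> mate M x = x.
Proof.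
by move=> ncov; rewrite /mate; case: pickP => [y xy | //]; case/coveredP: ncov; exists y.
Qed.

Lemma mateK M : matching e M -> involutive (mate M).
Proof.
move=> mM x; have [/mate_mem xM | ncov] := boolP (covered M x); last by rewrite !mate_id.
by apply: mateE mM _; rewrite setUC.
Qed.

Lemma covered_setU1 M x y z :
  covered ([set x; y] |: M) z = (z \in [set x; y]) || covered M z.
Proof.
apply/coveredP/orP => [[t /setU1P[zt | zt]] | [/set2P[] -> | /coveredP[t zt]]].
- by left; rewrite -zt set21.
- by right; apply/coveredP; exists t.
- by exists y; rewrite setU11.
- by exists x; rewrite setUC setU11.
- by exists t; rewrite setU1r.
Qed.

Lemma covered_setD1 M f z : matching e M -> f \in M ->
  covered (M :\ f) z = covered M z && (z \notin f).
Proof.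
case=> M_E dis fM; apply/coveredP/andP => [[t /setD1P[ztf ztM]] | [/coveredP[t ztM] zf]].
  split; first by apply/coveredP; exists t.
  by rewrite (disjointFr (dis _ _ ztM fM ztf) (set21 z t)).
by exists t; rewrite !inE ztM andbT; apply: contraNneq zf => <-; apply: set21.
Qed.

Lemma matchingS M N : N \subset M -> matching e M -> matching e N.
Proof.
move=> /subsetP NM [/subsetP M_E dis]; split; first by apply/subsetP => f /NM /M_E.
by move=> f g /NM fM /NM gM; apply: dis.
Qed.

Lemma matching_setU1 M x y : matching e M -> e x y ->
  ~~ covered M x -> ~~ covered M y -> matching e ([set x; y] |: M).
Proof.
move=> mM xy nx ny; have [/subsetP M_E dis] := mM; split.
  by apply/subsetP => f /setU1P[-> | /M_E //]; rewrite edgesP.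
have new_disj g : g \in M -> [disjoint [set x; y] & g].
  move=> gM; apply/disjointP => t /set2P[] -> tg.
  - by case/negP: nx; apply: covered_mem mM gM tg.
  - by case/negP: ny; apply: covered_mem mM gM tg.
move=> f g /setU1P[-> | fM] /setU1P[-> | gM]; rewrite ?eqxx //.
- by move=> _; apply: new_disj.
- by move=> _; rewrite disjoint_sym; apply: new_disj.
- exact: dis.
Qed.

Lemma restP M1 M2 f : (f \in rest M1 M2) = [&& f \in E, f \notin M1 & f \notin M2].
Proof. by rewrite !inE negb_or andbC andbA. Qed.

Lemma rest_edgesC M1 M2 : rest M2 M1 = rest M1 M2.
Proof. by rewrite /rest_edges setUC. Qed.

Lemma rest_edge M1 M2 f : f \in rest M1 M2 -> f \in E.
Proof. by rewrite restP => /andP[]. Qed.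

Lemma rest_edge_rel M1 M2 x y : [set x; y] \in rest M1 M2 -> e x y.
Proof. by move/rest_edge; rewrite edgesP. Qed.

Definition max_pair M1 M2 := [/\ matching e M1, matching e M2, [disjoint M1 & M2] &
  forall N1 N2, matching e N1 -> matching e N2 -> [disjoint N1 & N2] ->
    #|N1 :|: N2| <= #|M1 :|: M2|].

Lemma max_pairC M1 M2 : max_pair M1 M2 -> max_pair M2 M1.
Proof.
case=> m1 m2 d hmax; split; rewrite 1?disjoint_sym // => N1 N2 n1 n2 dN.
by rewrite (setUC M2); apply: hmax.
Qed.

Lemma max_pair_eq_card M1 M2 N1 N2 : max_pair M1 M2 ->
  matching e N1 -> matching e N2 -> [disjoint N1 & N2] ->
  #|N1 :|: N2| = #|M1 :|: M2| -> max_pair N1 N2.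
Proof.
by case=> _ _ _ hmax n1 n2 dN eq_card; split=> // K1 K2 k1 k2 dK; rewrite eq_card hmax.
Qed.

Lemma rest_edge_covered M1 M2 x y : max_pair M1 M2 ->
  [set x; y] \in rest M1 M2 -> ~~ covered M1 x -> covered M1 y.
Proof.
case=> m1 m2 d hmax; rewrite restP => /and3P[xyE xyM1 xyM2] nx; apply: contraT => ny.
have mN : matching e ([set x; y] |: M1) by apply: matching_setU1; rewrite -?edgesP.
have dN : [disjoint [set x; y] |: M1 & M2].
  apply/disjointP => f /setU1P[-> | fM1] fM2; first by rewrite fM2 in xyM2.
  by rewrite (disjointFr d fM1) in fM2.
have := hmax _ _ mN m2 dN.
by rewrite -setUA cardsU1 !inE negb_or xyM1 xyM2 add1n ltnn.
Qed.

Definition swap_on M1 M2 C :=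
  [set f in M1 | ~~ (f \subset C)] :|: [set f in M2 | f \subset C].

Lemma mate_closed_sub M C f t : matching e M -> {in C, forall u, mate M u \in C} ->
  f \in M -> t \in f -> t \in C -> f \subset C.
Proof.
move=> mM CM fM tf tC; have [u _ fE] := edge_through (matching_edge mM fM) tf.
rewrite fE; have <- : mate M t = u by apply: mateE mM _; rewrite -fE.
by apply/subsetP => v /set2P[] ->; last apply: CM.
Qed.

Lemma swap_on_matching M1 M2 C : matching e M1 -> matching e M2 ->
  {in C, forall t, mate M1 t \in C} -> {in C, forall t, mate M2 t \in C} ->
  matching e (swap_on M1 M2 C).
Proof.
move=> m1 m2 C1 C2; have [/subsetP M1_E dis1] := m1; have [/subsetP M2_E dis2] := m2.
split; first by apply/subsetP => f /setUP[] /setIdP[fM _]; [apply: M1_E | apply: M2_E].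
have mixed f g : f \in M1 -> ~~ (f \subset C) -> g \in M2 -> g \subset C ->
    [disjoint f & g].
  move=> fM fC gM gC; apply/disjointP => t tf tg.
  by rewrite (mate_closed_sub m1 C1 fM tf (subsetP gC t tg)) in fC.
move=> f g /setUP[] /setIdP[fM fC] /setUP[] /setIdP[gM gC].
- exact: dis1.
- by move=> _; apply: mixed.
- by move=> _; rewrite disjoint_sym; apply: mixed.
- exact: dis2.
Qed.

Lemma swap_onU M1 M2 C : swap_on M1 M2 C :|: swap_on M2 M1 C = M1 :|: M2.
Proof.
apply/setP => f; rewrite !inE.
by case: (f \in M1); case: (f \in M2); case: (f \subset C).
Qed.

Lemma swap_on_disjoint M1 M2 C :
  [disjoint M1 & M2] -> [disjoint swap_on M1 M2 C & swap_on M2 M1 C].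
Proof.
move=> d; apply/disjointP => f.
rewrite !inE => /orP[] /andP[fM fC] /orP[] /andP[fM' fC'].
- by rewrite (disjointFr d fM) in fM'.
- by rewrite fC' in fC.
- by rewrite fC in fC'.
- by rewrite (disjointFr d fM') in fM.
Qed.

(* Swapping M1 and M2 on the alternating chain C of y frees y in M1; C
   contains at most one of the M1-free vertices x and z, and the other one then
   gives an edge that can be added to the new M1. *)
Lemma kempe_contra M1 M2 x y z : max_pair M1 M2 ->
  [set x; y] \in rest M1 M2 -> [set y; z] \in rest M1 M2 -> x != z ->
  ~~ covered M2 y -> ~~ covered M1 x -> ~~ covered M1 z -> False.
Proof.
move=> hM xyR yzR xz ny nx nz; have [m1 m2 d _] := hM.
have [C [yC C1 C2 fixC]] := involution_chain (mateK m1) (mateK m2) (mate_id ny).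
set N1 := swap_on M1 M2 C; set N2 := swap_on M2 M1 C.
have hN : max_pair N1 N2.
  apply: (max_pair_eq_card hM); rewrite ?swap_onU ?swap_on_disjoint //;
    exact: swap_on_matching.
have RN : rest N1 N2 = rest M1 M2 by rewrite /rest_edges swap_onU.
have N1y : ~~ covered N1 y.
  apply/coveredP => -[t]; rewrite !inE => /orP[] /andP[ytM ytC].
  - by rewrite (mate_closed_sub m1 C1 ytM (set21 y t) yC) in ytC.
  - by rewrite (covered_mem m2 ytM (set21 y t)) in ny.
have N1w w : w \notin C -> ~~ covered M1 w -> ~~ covered N1 w.
  move=> wC nw; apply/coveredP => -[t]; rewrite !inE => /orP[] /andP[wtM wtC].
  - by rewrite (covered_mem m1 wtM (set21 w t)) in nw.
  - by rewrite (subsetP wtC w (set21 w t)) in wC.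
have : (x \notin C) || (z \notin C).
  rewrite -negb_and; apply: contra xz => /andP[xC zC].
  by rewrite (fixC x z xC zC (mate_id nx) (mate_id nz)).
case/orP=> [xC | zC].
- by case/negP: N1y; apply: (rest_edge_covered hN _ (N1w x xC nx)); rewrite RN.
- case/negP: N1y; apply: (rest_edge_covered hN _ (N1w z zC nz)).
  by rewrite RN setUC.
Qed.

Lemma nbrs_uncovered M x s : matching e M -> uniq s -> all (e x) s -> deg e x <= size s ->
  all (fun y => [set x; y] \notin M) s -> ~~ covered M x.
Proof.
move=> mM us s_nbr dx /allP s_free; apply/coveredP => -[y xyM].
by have := s_free y (deg_nbr_mem us s_nbr dx (matching_rel mM xyM)); rewrite xyM.
Qed.

Hypothesis deg_range : forall x, 2 <= deg e x <= 3.
Hypothesis deg3_indep : forall x y, e x y -> ~~ ((deg e x == 3) && (deg e y == 3)).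

Lemma deg3_nbr_deg2 x y : e x y -> deg e x = 3 -> deg e y = 2.
Proof. by move=> xy dx; have := deg3_indep xy; have := deg_range y; rewrite dx eqxx /=; lia. Qed.

Definition P3_edge x1 x2 x3 g := (g == [set x1; x2]) || (g == [set x2; x3]).

Definition saturated_P3 M1 M2 x1 x2 x3 :=
  [/\ x1 != x3, [set x1; x2] \in rest M1 M2, [set x2; x3] \in rest M1 M2, deg e x2 = 2
    & [&& covered M1 x1, covered M2 x1, covered M1 x3 & covered M2 x3]].

Lemma P3_edge_sub x1 x2 x3 g : P3_edge x1 x2 x3 g -> {subset g <= [set x1; x2; x3]}.
Proof. by case/orP=> /eqP -> z; rewrite !inE => /orP[] ->; rewrite ?orbT. Qed.

Lemma P3_edge_mid x1 x2 x3 g : P3_edge x1 x2 x3 g -> x2 \in g.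
Proof. by case/orP=> /eqP ->; rewrite !inE eqxx ?orbT. Qed.

Lemma P3_edge_end x1 x2 x3 w : w \in [set x1; x3] -> P3_edge x1 x2 x3 [set w; x2].
Proof. by case/set2P=> ->; rewrite /P3_edge ?eqxx // setUC eqxx orbT. Qed.

Lemma P3_edge_disjoint x1 x2 x3 y1 y2 y3 g :
  [disjoint [set x1; x2; x3] & [set y1; y2; y3]] ->
  P3_edge x1 x2 x3 g -> ~~ P3_edge y1 y2 y3 g.
Proof.
move=> dXY hx; have x2g := P3_edge_mid hx; apply/negP => /P3_edge_sub/(_ _ x2g).
by rewrite (disjointFr dXY (P3_edge_sub hx x2g)).
Qed.

Lemma saturated_P3_rev M1 M2 x1 x2 x3 :
  saturated_P3 M1 M2 x1 x2 x3 -> saturated_P3 M1 M2 x3 x2 x1.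
Proof.
by case=> x13 r12 r23 d2 /and4P[c1 c2 c3 c4]; split; rewrite 1?eq_sym 1?setUC ?c1 ?c2 ?c3 ?c4.
Qed.

Lemma saturated_P3C M1 M2 x1 x2 x3 :
  saturated_P3 M1 M2 x1 x2 x3 -> saturated_P3 M2 M1 x1 x2 x3.
Proof.
by case=> x13 r12 r23 d2 /and4P[c1 c2 c3 c4]; split; rewrite 1?rest_edgesC ?c1 ?c2 ?c3 ?c4.
Qed.

Lemma saturated_P3_transfer M1 M2 N1 N2 x1 x2 x3 : saturated_P3 M1 M2 x1 x2 x3 ->
  [set x1; x2] \in rest N1 N2 -> [set x2; x3] \in rest N1 N2 ->
  {in [set x1; x3], forall z, covered N1 z = covered M1 z /\ covered N2 z = covered M2 z} ->
  saturated_P3 N1 N2 x1 x2 x3.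
Proof.
case=> x13 _ _ d2 c r12 r23 cov; split=> //.
by have [-> ->] := cov x1 (set21 _ _); have [-> ->] := cov x3 (set22 _ _).
Qed.

Lemma saturated_mid_nbr M1 M2 x1 x2 x3 w :
  saturated_P3 M1 M2 x1 x2 x3 -> e x2 w -> (w == x1) || (w == x3).
Proof.
case=> x13 r12 r23 d2 _ x2w.
have := @deg_nbr_mem x2 [:: x1; x3] w; rewrite !inE; apply=> //=.
- by rewrite inE x13.
- by rewrite (rest_edge_rel r23) esym (rest_edge_rel r12).
- by rewrite d2.
Qed.

Definition exchange M x y a := [set x; y] |: (M :\ [set x; a]).

Lemma rest_exchange M1 M2 x y a g :
  g \in rest M1 M2 -> g != [set x; y] -> g \in rest (exchange M1 x y a) M2.
Proof.
rewrite !restP => /and3P[-> gM1 ->] gx.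
by rewrite in_setU1 negb_or gx in_setD1 (negbTE gM1) andbF.
Qed.

Lemma covered_exchange M x y a z : matching e M -> [set x; a] \in M ->
  z \notin [set x; y; a] -> covered (exchange M x y a) z = covered M z.
Proof.
move=> mM xaM; rewrite covered_setU1 covered_setD1 // !inE !negb_or.
by case/andP=> /andP[/negbTE -> /negbTE ->] /negbTE ->; rewrite andbT.
Qed.

Section MaxPair.
Variables M1 M2 : {set {set T}}.
Hypothesis hM : max_pair M1 M2.

Lemma P3_mid_uncovered x1 x2 x3 : x1 != x3 -> [set x1; x2] \in rest M1 M2 ->
  [set x2; x3] \in rest M1 M2 -> deg e x2 = 2 -> ~~ covered M1 x2 && ~~ covered M2 x2.
Proof.
case: hM => m1 m2 _ _ x13 r12 r23 d2.
have free M : matching e M -> [set x1; x2] \notin M -> [set x2; x3] \notin M ->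
    ~~ covered M x2.
  move=> mM n12 n23; apply: (nbrs_uncovered (s := [:: x1; x3])) => //=.
  - by rewrite inE x13.
  - by rewrite (rest_edge_rel r23) esym (rest_edge_rel r12).
  - by rewrite d2.
  - by rewrite setUC n12 n23.
by move: r12 r23; rewrite !restP => /and3P[_ n12 n12'] /and3P[_ n23 n23']; rewrite !free.
Qed.

Lemma saturated_mid_uncovered x1 x2 x3 :
  saturated_P3 M1 M2 x1 x2 x3 -> ~~ covered M1 x2 && ~~ covered M2 x2.
Proof. by case=> x13 r12 r23 d2 _; exact: P3_mid_uncovered x13 r12 r23 d2. Qed.

Lemma saturated_end_nbrs x1 x2 x3 : saturated_P3 M1 M2 x1 x2 x3 ->
  uniq [:: x2; mate M1 x1; mate M2 x1] && all (e x1) [:: x2; mate M1 x1; mate M2 x1].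
Proof.
case: hM => m1 m2 d _ [_ r12 _ _ /and4P[c1 c2 _ _]].
have m1x := mate_mem c1; have m2x := mate_mem c2.
rewrite /= (rest_edge_rel r12) (matching_rel m1 m1x) (matching_rel m2 m2x) !inE negb_or.
rewrite !andbT -andbA; apply/and3P; split.
- by apply: contraTneq r12 => ->; rewrite restP m1x andbF.
- by apply: contraTneq r12 => ->; rewrite restP m2x !andbF.
- by apply: contraTneq m2x => <-; rewrite (disjointFr d m1x).
Qed.

Lemma saturated_end_deg x1 x2 x3 : saturated_P3 M1 M2 x1 x2 x3 -> deg e x1 = 3.
Proof.
move=> hP; have /andP[us s_nbr] := saturated_end_nbrs hP.
by apply/eqP; rewrite eqn_leq (deg_ge_uniq us s_nbr) andbT; case/andP: (deg_range x1).
Qed.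

Lemma saturated_ends_deg x1 x2 x3 w :
  saturated_P3 M1 M2 x1 x2 x3 -> w \in [set x1; x3] -> deg e w = 3.
Proof.
move=> hP /set2P[] ->; first exact: saturated_end_deg hP.
exact: saturated_end_deg (saturated_P3_rev hP).
Qed.

Lemma saturated_end_nbr x1 x2 x3 w : saturated_P3 M1 M2 x1 x2 x3 -> e x1 w ->
  [|| w == x2, [set x1; w] \in M1 | [set x1; w] \in M2].
Proof.
move=> hP x1w; have /andP[us s_nbr] := saturated_end_nbrs hP.
have [_ _ _ _ /and4P[c1 c2 _ _]] := hP.
have := deg_nbr_mem us s_nbr _ x1w; rewrite (saturated_end_deg hP) => /(_ isT).
by rewrite !inE => /or3P[-> | /eqP-> | /eqP->]; rewrite ?mate_mem ?orbT.
Qed.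

Lemma saturated_P3_rest_edge x1 x2 x3 g z : saturated_P3 M1 M2 x1 x2 x3 ->
  g \in rest M1 M2 -> z \in g -> z \in [set x1; x2; x3] -> P3_edge x1 x2 x3 g.
Proof.
move=> hP gR zg; have [y zy gE] := edge_through (rest_edge gR) zg; subst g.
have end_nbr w v : saturated_P3 M1 M2 w x2 v -> e w y -> [set w; y] \in rest M1 M2 -> y = x2.
  move=> hw wy wyR; case/or3P: (saturated_end_nbr hw wy) => [/eqP // | wyM | wyM];
    by rewrite restP wyM ?andbF in wyR.
rewrite /P3_edge !inE -orbA => /or3P[] /eqP zE; subst z.
- by rewrite (end_nbr _ _ hP zy gR) eqxx.
- by case/orP: (saturated_mid_nbr hP zy) => /eqP ->; rewrite ?eqxx ?orbT // setUC eqxx.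
- by rewrite (end_nbr _ _ (saturated_P3_rev hP) zy gR) setUC eqxx orbT.
Qed.

Lemma Hadj_leave_P3 x1 x2 x3 f g : saturated_P3 M1 M2 x1 x2 x3 ->
  P3_edge x1 x2 x3 f -> ~~ P3_edge x1 x2 x3 g -> Hadj e M1 M2 f g ->
  exists w a b, [/\ w \in [set x1; x3], [set w; a] \in M1 :|: M2, g = [set a; b]
    & a \notin [set x1; x2; x3]].
Proof.
move=> hP hf hg /and4P[_ gR fg]; have fX := P3_edge_sub hf.
have gX z : z \in g -> z \notin [set x1; x2; x3].
  by move=> zg; apply: contra hg; apply: saturated_P3_rest_edge hP gR zg.
case/or3P=> [/eqP fgE | /and4P[_ _ _ /set0Pn[z]] | /existsP[h /andP[]]].
- by rewrite fgE eqxx in fg.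
- by rewrite inE => /andP[/fX zX /gX]; rewrite zX.
case/and4P=> _ hE _ /set0Pn[z]; rewrite inE => /andP[zf zh].
case/and4P=> _ _ _ /set0Pn[a]; rewrite inE => /andP[ah ag].
have zX := fX z zf; have aX := gX a ag.
have hR : h \notin rest M1 M2.
  by apply: contra aX => hR; apply: P3_edge_sub (saturated_P3_rest_edge hP hR zh zX) _ ah.
have hM12 : h \in M1 :|: M2 by move: hR; rewrite restP hE /= negb_and !negbK inE.
have hE' : h = [set z; a].
  have [y _ hy] := edge_through hE zh; rewrite hy in ah *.
  by case/set2P: ah => [az | ->] //; rewrite az zX in aX.
have zw : z \in [set x1; x3].
  move: zX; rewrite !inE -orbA => /or3P[-> // | /eqP zx2 | ->]; last by rewrite orbT.
  have [m1 m2 _ _] := hM; have /andP[] := saturated_mid_uncovered hP; rewrite -zx2.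
  by case/setUP: hM12 => hM12; rewrite (covered_mem _ hM12 zh).
have [b _ gE] := edge_through (rest_edge gR) ag.
by exists z, a, b; rewrite -hE'.
Qed.

Lemma matched_nbr_notin_P3 y1 y2 y3 w a : saturated_P3 M1 M2 y1 y2 y3 ->
  deg e w = 3 -> [set w; a] \in M1 :|: M2 -> a \notin [set y1; y2; y3].
Proof.
move=> hP dw waM; have [m1 m2 _ _] := hM.
have wa : e w a by case/setUP: waM; apply: matching_rel.
rewrite !inE -orbA; apply/negP => /or3P[] /eqP ay; subst a.
- by have := deg3_indep wa; rewrite dw (saturated_end_deg hP) eqxx.
- have /andP[] := saturated_mid_uncovered hP.
  by case/setUP: waM => yM; rewrite (covered_mem _ yM (set22 w y2)).
- by have := deg3_indep wa; rewrite dw (saturated_end_deg (saturated_P3_rev hP)) eqxx.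
Qed.

Lemma matched_mid_contra u1 u2 u3 x :
  [set u1; u2] \in rest M1 M2 -> [set u2; u3] \in rest M1 M2 -> u1 != u3 ->
  e u2 x -> x \notin [:: u1; u3] -> [set u2; x] \in M1 -> False.
Proof.
move=> r12 r23 u13 u2x xu h2x; have [m1 m2 d _] := hM.
have u2_nbrs : uniq [:: u1; u3; x] && all (e u2) [:: u1; u3; x].
  move: xu; rewrite /= !inE !negb_or u2x (rest_edge_rel r23) esym (rest_edge_rel r12).
  by rewrite u13 !(eq_sym x) => /andP[-> ->].
have /andP[us s_nbr] := u2_nbrs.
have d3 : deg e u2 = 3.
  by apply/eqP; rewrite eqn_leq (deg_ge_uniq us s_nbr) andbT; case/andP: (deg_range u2).
have u2M2 : ~~ covered M2 u2.
  move: r12 r23; rewrite !restP => /and3P[_ _ n12] /and3P[_ _ n23].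
  apply: (nbrs_uncovered m2 us s_nbr); first by rewrite d3.
  by rewrite /= setUC n12 n23 (disjointFr d h2x).
have end_free u : [set u; u2] \in rest M1 M2 -> ~~ covered M1 u.
  move=> uR; have uu2 : e u u2 := rest_edge_rel uR.
  have uM2 : covered M2 u.
    by apply: (rest_edge_covered (max_pairC hM) _ u2M2); rewrite rest_edgesC setUC.
  have mu := mate_mem uM2.
  apply: (nbrs_uncovered (s := [:: u2; mate M2 u]) m1) => /=.
  - by rewrite inE andbT; apply: contraTneq uR => ->; rewrite restP mu !andbF.
  - by rewrite uu2 (matching_rel m2 mu).
  - by rewrite (deg3_nbr_deg2 _ d3) // esym.
  - by move: uR; rewrite restP (disjointFl d mu) => /and3P[_ -> _].
apply: (kempe_contra hM r12 r23 u13 u2M2 (end_free u1 r12)).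
by apply: end_free; rewrite setUC.
Qed.

Section Exchange.
Variables (x1 x2 x3 a b : T).
Hypotheses (hP : saturated_P3 M1 M2 x1 x2 x3) (x1aM : [set x1; a] \in M1).
Hypotheses (abR : [set a; b] \in rest M1 M2) (ax2 : a != x2).
Local Notation M1' := (exchange M1 x1 x2 a).

Let m1 : matching e M1. Proof. by case: hM. Qed.
Let m2 : matching e M2. Proof. by case: hM. Qed.
Let d12 : [disjoint M1 & M2]. Proof. by case: hM. Qed.
Let x12R : [set x1; x2] \in rest M1 M2. Proof. by case: hP. Qed.

Let x1a_x1x2 : [set x1; a] != [set x1; x2].
Proof.
apply/negP => /eqP /set2_eq_cases[[_ ax] | [x12 _]]; first by move: ax2; rewrite ax eqxx.
by move: (rest_edge_rel x12R); rewrite x12 eirr.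
Qed.

Lemma exchange_matching : matching e M1'.
Proof.
have /andP[n2 _] := saturated_mid_uncovered hP.
apply: matching_setU1; first exact: matchingS (subsetDl _ _) m1.
- exact: rest_edge_rel x12R.
- by rewrite covered_setD1 // set21 andbF.
- by rewrite covered_setD1 // (negbTE n2).
Qed.

Lemma exchange_max_pair : max_pair M1' M2.
Proof.
move: x12R; rewrite restP => /and3P[_ n1 n2].
have dN : [disjoint M1' & M2].
  apply/disjointP => f /setU1P[-> | /setD1P[_ fM1]] fM2; first by rewrite fM2 in n2.
  by rewrite (disjointFr d12 fM1) in fM2.
have UN : M1' :|: M2 = [set x1; x2] |: ((M1 :|: M2) :\ [set x1; a]).
  rewrite -setUA; congr (_ :|: _); apply/setP => f; rewrite !inE.
  by case: eqVneq => [-> | _] //=; exact: (disjointFr d12 x1aM).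
apply: (max_pair_eq_card hM exchange_matching m2 dN).
by rewrite UN cardsU1 [RHS](cardsD1 [set x1; a]) !inE x1aM (negbTE n1) (negbTE n2) andbF.
Qed.

Lemma exchange_saturated : saturated_P3 M1' M2 b a x1.
Proof.
have [_ _ _ _ /and4P[_ x1M2 _ _]] := hP.
have x1a := matching_rel m1 x1aM.
have da : deg e a = 2 := deg3_nbr_deg2 x1a (saturated_end_deg hP).
have bx1 : b != x1 by apply: contraTneq abR => ->; rewrite restP setUC x1aM andbF.
have a_nbrs : uniq [:: x1; b] && all (e a) [:: x1; b].
  by rewrite /= inE eq_sym bx1 esym x1a (rest_edge_rel abR).
have /andP[us s_nbr] := a_nbrs.
have aM2 : ~~ covered M2 a.
  apply: (nbrs_uncovered m2 us s_nbr); first by rewrite da.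
  have abM2 : [set a; b] \notin M2 by move: abR; rewrite restP => /and3P[].
  by rewrite /= setUC (disjointFr d12 x1aM) abM2.
have abR' : [set a; b] \in rest M1' M2.
  apply: rest_exchange abR _; apply/negP => /eqP /set2_eq_cases[[ax1 _] | [ax _]].
    by move: x1a; rewrite ax1 eirr.
  by move: ax2; rewrite ax eqxx.
have x1aR' : [set x1; a] \in rest M1' M2.
  rewrite restP (matching_edge m1 x1aM) in_setU1 in_setD1 eqxx (negbTE x1a_x1x2).
  by rewrite (disjointFr d12 x1aM).
have aM1' : ~~ covered M1' a.
  rewrite covered_setU1 covered_setD1 // set22 andbF orbF !inE negb_or ax2 andbT.
  by apply: contraTneq x1a => ->; rewrite eirr.
split=> //; rewrite 1?setUC //; apply/and4P; split=> //.
- exact: rest_edge_covered exchange_max_pair abR' aM1'.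
- by apply: (rest_edge_covered (max_pairC hM) _ aM2); rewrite rest_edgesC.
- by rewrite covered_setU1 set21.
Qed.

End Exchange.

End MaxPair.

Lemma P3_component_saturated M1 M2 u1 u2 u3 : max_pair M1 M2 ->
  P3_component e M1 M2 u1 u2 u3 -> saturated_P3 M1 M2 u1 u2 u3.
Proof.
move=> hM [/and3P[_ _ u13] r12 r23 _ compE].
have u2_rest w : [set u2; w] \in rest M1 M2 -> w \in [:: u1; u3].
  move=> u2wR; have : w \in [set t | connect (rest_rel e M1 M2) u1 t].
    by rewrite inE (connect_trans (connect1 r12) (connect1 u2wR)).
  rewrite compE !inE -orbA => /or3P[-> // | /eqP wu2 | ->]; last by rewrite orbT.
  by move: (rest_edge_rel u2wR); rewrite wu2 eirr.
have d2 : deg e u2 = 2.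
  case: (pickP [pred x | e u2 x & x \notin [:: u1; u3]]) => [x /andP[u2x xu] | none].
    have : [set u2; x] \notin rest M1 M2 by apply: contra xu; apply: u2_rest.
    rewrite restP edgesP u2x /= negb_and !negbK => /orP[] h2x.
    - by case: (matched_mid_contra hM r12 r23 u13 u2x xu h2x).
    - have r12' : [set u1; u2] \in rest M2 M1 by rewrite rest_edgesC.
      have r23' : [set u2; u3] \in rest M2 M1 by rewrite rest_edgesC.
      by case: (matched_mid_contra (max_pairC hM) r12' r23' u13 u2x xu h2x).
  apply/eqP; rewrite eqn_leq (@deg_le_size _ [:: u1; u3]); first by case/andP: (deg_range u2).
  by move=> y u2y; move: (none y); rewrite /= u2y => /negbFE.
have /andP[n1 n2] := P3_mid_uncovered hM u13 r12 r23 d2.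
have r21 : [set u2; u1] \in rest M1 M2 by rewrite setUC.
split=> //; apply/and4P; split.
- exact: rest_edge_covered hM r21 n1.
- by apply: (rest_edge_covered (max_pairC hM) _ n2); rewrite rest_edgesC.
- exact: rest_edge_covered hM r23 n1.
- by apply: (rest_edge_covered (max_pairC hM) _ n2); rewrite rest_edgesC.
Qed.

Lemma exchange_step M1 M2 x1 x2 x3 w a b :
  max_pair M1 M2 -> saturated_P3 M1 M2 x1 x2 x3 -> w \in [set x1; x3] ->
  [set w; a] \in M1 :|: M2 -> [set a; b] \in rest M1 M2 -> a != x2 ->
  exists N1 N2, [/\ max_pair N1 N2, saturated_P3 N1 N2 b a w,
    {in rest M1 M2, forall g, g != [set w; x2] -> g \in rest N1 N2}
    & forall z, z \notin [set w; x2; a] ->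
        covered N1 z = covered M1 z /\ covered N2 z = covered M2 z].
Proof.
move=> hM hP wX waM abR ax2; have [m1 m2 _ _] := hM.
have [v hw] : exists v, saturated_P3 M1 M2 w x2 v.
  by case/set2P: wX => ->; [exists x3 | exists x1; apply: saturated_P3_rev].
case/setUP: waM => waM.
  exists (exchange M1 w x2 a), M2; split.
  - by apply: (exchange_max_pair hM hw).
  - by apply: (exchange_saturated hM hw).
  - by move=> g gR; apply: rest_exchange.
  - by move=> z zX; rewrite (covered_exchange m1 waM zX).
have hM' := max_pairC hM; have hw' := saturated_P3C hw.
have abR' : [set a; b] \in rest M2 M1 by rewrite rest_edgesC.
exists M1, (exchange M2 w x2 a); split.
- by apply/max_pairC/(exchange_max_pair hM' hw').
- by apply/saturated_P3C/(exchange_saturated hM' hw').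
- by move=> g gR gw; rewrite -rest_edgesC; apply: rest_exchange => //; rewrite rest_edgesC.
- by move=> z zX; rewrite (covered_exchange m2 waM zX).
Qed.

Lemma exchange_far_P3 M1 M2 N1 N2 x1 x2 x3 y1 y2 y3 w a :
  max_pair M1 M2 -> saturated_P3 M1 M2 y1 y2 y3 ->
  [disjoint [set x1; x2; x3] & [set y1; y2; y3]] ->
  w \in [set x1; x3] -> a \notin [set y1; y2; y3] ->
  {in rest M1 M2, forall g, g != [set w; x2] -> g \in rest N1 N2} ->
  (forall z, z \notin [set w; x2; a] ->
     covered N1 z = covered M1 z /\ covered N2 z = covered M2 z) ->
  saturated_P3 N1 N2 y1 y2 y3.
Proof.
move=> hM hY dXY wX aY restN covN; have wx2X := P3_edge_end x2 wX.
have Y_rest g : P3_edge y1 y2 y3 g -> g \in rest M1 M2 -> g \in rest N1 N2.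
  move=> gY gR; apply: restN gR _; apply: contraTneq gY => ->.
  exact: P3_edge_disjoint dXY wx2X.
have [_ r12 r23 _ _] := hY.
apply: saturated_P3_transfer hY (Y_rest _ _ r12) (Y_rest _ _ r23) _.
- by rewrite /P3_edge eqxx.
- by rewrite /P3_edge eqxx orbT.
move=> z zY; apply: covN.
have {}zY : z \in [set y1; y2; y3] by move: zY; rewrite !inE => /orP[] ->; rewrite ?orbT.
rewrite !inE !negb_or -andbA; apply/and3P; split; apply: contraTneq zY => -> //.
- by rewrite (disjointFr dXY (P3_edge_sub wx2X (set21 w x2))).
- by rewrite (disjointFr dXY (P3_edge_sub wx2X (set22 w x2))).
Qed.

Lemma Hadj_path_rest M1 M2 f p : path (Hadj e M1 M2) f p -> {subset p <= rest M1 M2}.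
Proof.
elim: p f => // g p IH f /= /andP[/and4P[_ gR _ _] pth] h.
by rewrite inE => /orP[/eqP -> // | /(IH _ pth)].
Qed.

Lemma Hadj_path_transfer M1 M2 N1 N2 f p : path (Hadj e M1 M2) f p ->
  {subset f :: p <= rest N1 N2} -> path (Hadj e N1 N2) f p.
Proof.
elim: p f => // g p IH f /= /andP[/and4P[_ _ fg dist] pth] sub.
have fN : f \in rest N1 N2 by apply: sub; rewrite mem_head.
have gN : g \in rest N1 N2 by apply: sub; rewrite in_cons mem_head orbT.
rewrite /Hadj fN gN fg dist /=; apply: IH pth _ => h hp.
by apply: sub; rewrite in_cons hp orbT.
Qed.

Lemma no_Hadj_path n M1 M2 x1 x2 x3 y1 y2 y3 f p : size p <= n -> max_pair M1 M2 ->
  saturated_P3 M1 M2 x1 x2 x3 -> saturated_P3 M1 M2 y1 y2 y3 ->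
  [disjoint [set x1; x2; x3] & [set y1; y2; y3]] ->
  P3_edge x1 x2 x3 f -> path (Hadj e M1 M2) f p -> ~~ P3_edge y1 y2 y3 (last f p).
Proof.
elim: n => [|n IH] in M1 M2 x1 x2 x3 f p *.
  by case: p => // _ _ _ _ dXY hf _; apply: P3_edge_disjoint dXY hf.
move=> sz hM hX hY dXY hf pth.
have [/hasP[f' f'p hf'] | noX] := boolP (has (P3_edge x1 x2 x3) p).
  case/splitPr: f'p sz pth => p1 p2; rewrite size_cat cat_path last_cat /= => sz.
  case/andP=> _ /andP[_ pth2]; apply: (IH M1 M2 x1 x2 x3 f' p2) => //.
  by move: sz; rewrite addnS ltnS; apply: leq_trans; apply: leq_addl.
case: p sz pth noX => [|g p] sz; first by move=> _ _; apply: P3_edge_disjoint dXY hf.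
rewrite /= => /andP[fg pth] /norP[hg noX].
have [w [a [b [wX waM gE aX]]]] := Hadj_leave_P3 hM hX hf hg fg.
have abR : [set a; b] \in rest M1 M2 by rewrite -gE; case/and4P: fg.
have ax2 : a != x2 by apply: contraNneq aX => ->; rewrite !inE eqxx orbT.
have [N1 [N2 [hN hW restN covN]]] := exchange_step hM hX wX waM abR ax2.
have aY := matched_nbr_notin_P3 hM hY (saturated_ends_deg hM hX wX) waM.
apply: (IH N1 N2 b a w g p) => //.
- exact: exchange_far_P3 hM hY dXY wX aY restN covN.
- apply/disjointP => z zX zY; move: zX; rewrite !inE -orbA => /or3P[] /eqP zE; subst z.
  + have /P3_edge_sub/(_ a (set21 a b)) := saturated_P3_rest_edge hM hY abR (set22 a b) zY.
    by apply/negP.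
  + by rewrite zY in aY.
  + by have := P3_edge_sub (P3_edge_end x2 wX) (set21 w x2); rewrite (disjointFl dXY zY).
- by rewrite gE /P3_edge setUC eqxx.
- apply: (Hadj_path_transfer pth) => h hgp; apply: restN.
    by move: hgp; rewrite inE => /orP[/eqP -> | /(Hadj_path_rest pth)]; rewrite ?gE.
  have hX' : ~~ P3_edge x1 x2 x3 h.
    move: hgp; rewrite inE => /orP[/eqP -> // | hp].
    by apply: contra noX => hh; apply/hasP; exists h.
  by apply: contraNneq hX' => ->; apply: P3_edge_end.
Qed.

Lemma P3_components_disjoint M1 M2 u1 u2 u3 v1 v2 v3 :
  P3_component e M1 M2 u1 u2 u3 -> P3_component e M1 M2 v1 v2 v3 ->
  [set u1; u2; u3] != [set v1; v2; v3] ->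
  [disjoint [set u1; u2; u3] & [set v1; v2; v3]].
Proof.
move=> [_ _ _ _ <-] [_ _ _ _ <-] neq; apply/disjointP => z.
have rsym : connect_sym (rest_rel e M1 M2).
  by apply: sym_connect_sym => x y; rewrite /rest_rel setUC.
rewrite !inE => uz vz; case/eqP: neq; apply/setP => t; rewrite !inE.
by rewrite (same_connect rsym uz) (same_connect rsym vz).
Qed.

End Graph.

Theorem lemma3 (T : finType) (e : rel T) (M1 M2 : {set {set T}})
  (u1 u2 u3 v1 v2 v3 : T) :
  symmetric e -> irreflexive e ->
  connected_graph e ->
  (forall x, 2 <= deg e x <= 3) ->
  (forall x y, e x y -> ~~ ((deg e x == 3) && (deg e y == 3))) ->
  matching e M1 -> matching e M2 -> [disjoint M1 & M2] ->
  (forall N1 N2, matching e N1 -> matching e N2 -> [disjoint N1 & N2] ->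
     #|N1 :|: N2| <= #|M1 :|: M2|) ->
  (forall N1 N2, matching e N1 -> matching e N2 -> [disjoint N1 & N2] ->
     #|N1 :|: N2| = #|M1 :|: M2| -> ncomp e M1 M2 <= ncomp e N1 N2) ->
  P3_component e M1 M2 u1 u2 u3 ->
  P3_component e M1 M2 v1 v2 v3 ->
  [set u1; u2; u3] != [set v1; v2; v3] ->
  ~~ connect (Hadj e M1 M2) [set u1; u2] [set v1; v2]
  /\ ~~ connect (Hadj e M1 M2) [set u2; u3] [set v2; v3]
  /\ ~~ connect (Hadj e M1 M2) [set u1; u2] [set v2; v3]
  /\ ~~ connect (Hadj e M1 M2) [set u2; u3] [set v1; v2].
Proof.
move=> esym eirr _ deg_range deg3_indep m1 m2 d hmax _ hu hv neq.
have hM : max_pair e M1 M2 by split.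
have hU := P3_component_saturated esym eirr deg_range deg3_indep hM hu.
have hV := P3_component_saturated esym eirr deg_range deg3_indep hM hv.
have dUV := P3_components_disjoint hu hv neq.
have sep f g : P3_edge u1 u2 u3 f -> P3_edge v1 v2 v3 g -> ~~ connect (Hadj e M1 M2) f g.
  move=> hf hg; apply/connectP => -[p pth gE].
  have := no_Hadj_path esym eirr deg_range deg3_indep (leqnn _) hM hU hV dUV hf pth.
  by rewrite -gE hg.
by split; [|split; [|split]]; apply: sep; rewrite /P3_edge eqxx ?orbT.
Qed.
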